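(* As sequences indexed by $n\geq1$, $\mathrm{orb}^\sigma=\mathrm{orb}^\sigma_1\ast\mathbf{1}$ and $\mathrm{orb}^\sigma_1=\mathrm{A113788}$; that is, for every $n\geq1$, $\mathrm{orb}^\sigma(n)=\sum_{d\mid n}\mathrm{orb}^\sigma_1(d)$ and $\mathrm{orb}^\sigma_1(n)=\frac1n\sum_{d\mid n}p(d)\,\mu(n/d)$.
   Context: For $n\geq1$ let $V_n=\{v_0,\dots,v_{n-1}\}$, indices modulo $n$, and let the cyclic group $\langle\sigma\rangle=\{1,\sigma,\dots,\sigma^{n-1}\}$ act on subsets of $V_n$ via $\sigma(v_i)=v_{i+1}$. Let $\mathbf{X}_n$ be the family of subsets $X\subseteq V_n$ such that (a) there is no $i\in\mathbb{Z}_n$ with $v_i,v_{i+1}\in X$, and (b) for every $i\in\mathbb{Z}_n$ at least one of $v_i,v_{i+1},v_{i+2}$ lies in $X$ (for $n\geq 3$: the maximal independent sets of the cycle graph $C_n$). $\mathrm{orb}^\sigma(n)$ is the number of $\langle\sigma\rangle$-orbits of $\mathbf{X}_n$ (unlabeled MISs), and for $d\mid n$, $\mathrm{orb}^\sigma_d(n)$ is the number of these orbits of cardinality $n/d$. Perrin: $p(1)=0,p(2)=2,p(3)=3$, $p(n)=p(n-2)+p(n-3)$ ($n\geq4$). Dirichlet convolution $(f\ast g)(n)=\sum_{d\mid n}f(d)g(n/d)$; $\mu$ Möbius function; $\mathbf{1}(n)=1$; $\mathrm{A113788}(n)=\frac1n(p\ast\mu)(n)$. *)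

From mathcomp Require Import all_boot all_order all_algebra.
Set Implicit Arguments. Unset Strict Implicit. Unset Printing Implicit Defensive.
Import GRing.Theory Num.Theory.

(* V_n = 'I_n (v_i = i), the rotation sigma : v_i |-> v_{i+1} (indices mod n) *)
Definition sigma (n : nat) (i : 'I_n) : 'I_n := ordS i.

Definition sigma_set (n : nat) (X : {set 'I_n}) : {set 'I_n} := (@sigma n) @: X.

Definition inX (n : nat) (X : {set 'I_n}) : bool :=
  [forall i : 'I_n, ~~ ((i \in X) && (sigma i \in X))] &&
  [forall i : 'I_n, [|| i \in X, sigma i \in X | sigma (sigma i) \in X]].

Definition Xfam (n : nat) : {set {set 'I_n}} := [set X | inX X].

Definition sorbit (n : nat) (X : {set 'I_n}) : {set {set 'I_n}} :=
  [set iter k (@sigma_set n) X | k : 'I_n].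

Definition orbits (n : nat) : {set {set {set 'I_n}}} :=
  [set sorbit X | X in Xfam n].

Definition orb (n : nat) : nat := #|orbits n|.

Definition orbd (n d : nat) : nat := #|[set O in orbits n | #|O| == n %/ d]|.

Definition orb1 (n : nat) : nat := orbd n 1.

Fixpoint perrin (n : nat) : nat :=
  match n with
  | 0 => 3
  | 1 => 0
  | 2 => 2
  | (m.+1 as k).+2 => perrin k + perrin m
  end.

Definition mobius (n : nat) : int :=
  if n == 0 then 0%R
  else if all (fun p => logn p n == 1) (primes n)
       then ((-1) ^+ size (primes n))%R else 0%R.

From mathcomp Require Import all_boot all_order all_algebra.
From mathcomp Require Import zify.
Set Implicit Arguments. Unset Strict Implicit. Unset Printing Implicit Defensive.
Import GRing.Theory Num.Theory.

(* Rotation splits X_n into orbits whose sizes divide n.  The members of an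
   orbit of size e are the e-periodic sets, i.e. the periodic extensions of the
   members of X_e whose orbit has full size e; so the orbits of size e in X_n
   correspond to the orbits of size e in X_e.  This gives
   orb(n) = sum_{e | n} orb_1(e), and counting sets instead of orbits gives
   |X_n| = sum_{e | n} e orb_1(e).  A transfer-matrix count of cyclic binary
   words shows |X_n| = p(n), and Moebius inversion yields the formula for
   orb_1(n). *)

Definition mis_window (a b c : bool) : bool := ~~ (a && b) && [|| a, b | c].

Fixpoint mis_path (u : seq bool) : bool :=
  if u is a :: ((b :: c :: _) as r) then mis_window a b c && mis_path r else true.

Lemma mis_pathP u :
  reflect (forall i, i.+2 < size u ->
             mis_window (nth false u i) (nth false u i.+1) (nth false u i.+2))
          (mis_path u).
Proof.
elim: u => [|a u IH]; first exact: ReflectT.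
case: u IH => [|b [|c r]] IH; try by apply: ReflectT => i /=; rewrite ?ltnS ?ltn0.
apply: (iffP andP) => [[ok_abc /IH ok_r] [|i] //= i_lt | ok]; first exact: ok_r.
by split; [apply: (ok 0) | apply/IH => i; apply: (ok i.+1)].
Qed.

Fixpoint bitseqs (k : nat) : seq (seq bool) :=
  if k is k'.+1 then map (cons true) (bitseqs k') ++ map (cons false) (bitseqs k')
  else [:: [::]].

Lemma cons_inj (T : Type) (x : T) : injective (cons x).
Proof. by move=> s t []. Qed.

Lemma mem_bitseqs k s : (s \in bitseqs k) = (size s == k).
Proof.
elim: k s => [|k IH] [|b s] //=; rewrite mem_cat.
  by apply/negbTE; rewrite negb_or; apply/andP; split; apply/mapP => -[].
case: b; rewrite (mem_map (@cons_inj _ _)) IH eqSS.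
  by case: (size s == k) => //=; apply/negbTE/mapP => -[].
by rewrite orbC; case: (size s == k) => //=; apply/negbTE/mapP => -[].
Qed.

Lemma bitseqs_uniq k : uniq (bitseqs k).
Proof.
elim: k => [|k IH] //=; rewrite cat_uniq !map_inj_uniq ?IH ?andbT //=; try exact: cons_inj.
by apply/hasPn => s /mapP [t _ ->]; apply/mapP => -[].
Qed.

Section CharacteristicWord.
Variable n : nat.

Definition char_word (X : {set 'I_n}) : seq bool := [seq i \in X | i <- enum 'I_n].

Lemma size_char_word X : size (char_word X) = n.
Proof. by rewrite size_map size_enum_ord. Qed.

Lemma nth_char_word X (i : 'I_n) : nth false (char_word X) i = (i \in X).
Proof.
rewrite (nth_map i) ?size_enum_ord //; congr (_ \in X).
by apply: val_inj; rewrite /= nth_enum_ord.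
Qed.

Lemma char_word_inj : injective char_word.
Proof. by move=> X Y HXY; apply/setP => i; rewrite -!nth_char_word HXY. Qed.

Lemma card_char_word (P : pred (seq bool)) :
  #|[set X : {set 'I_n} | P (char_word X)]| = count P (bitseqs n).
Proof.
have words : perm_eq (map char_word (enum {set 'I_n})) (bitseqs n).
  apply: uniq_perm; first by rewrite map_inj_uniq ?enum_uniq //; exact: char_word_inj.
    exact: bitseqs_uniq.
  move=> s; rewrite mem_bitseqs; apply/mapP/idP => [[X _ ->]|/eqP Hs].
    by rewrite size_char_word.
  exists [set i : 'I_n | nth false s i]; first by rewrite mem_enum.
  apply: (@eq_from_nth _ false); first by rewrite size_char_word.
  by move=> i; rewrite Hs => Hi; rewrite (nth_char_word _ (Ordinal Hi)) inE.
rewrite -(permP words) count_map cardE /enum_mem size_filter count_filter.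
by apply: eq_count => X; rewrite /= !inE andbT.
Qed.

End CharacteristicWord.

Lemma val_sigma n (i : 'I_n) : val (sigma i) = i.+1 %% n.
Proof. by []. Qed.

Lemma modnSml m d : (m %% d).+1 = m.+1 %[mod d].
Proof. by rewrite -addn1 modnDml addn1. Qed.

Lemma inX_windowsE n (X : {set 'I_n}) :
  inX X = [forall i, mis_window (i \in X) (sigma i \in X) (sigma (sigma i) \in X)].
Proof.
apply/andP/forallP => [[/forallP H1 /forallP H2] i | H]; first by rewrite /mis_window H1 H2.
by split; apply/forallP => i; case/andP: (H i).
Qed.

Lemma nth_cat_take2 n (s : seq bool) j : 1 < n -> size s = n -> j < n.+2 ->
  nth false (s ++ take 2 s) j = nth false s (j %% n).
Proof.
move=> n_gt1 size_s j_lt; rewrite nth_cat size_s; case: ltnP => j_n.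
  by rewrite modn_small.
rewrite nth_take; last by lia.
have -> : j = n + (j - n) by lia.
by rewrite modnDl modn_small ?addKn //; lia.
Qed.

(* Membership in [X_n] is the path condition on the characteristic word with
   its first two letters repeated at the end, which closes the cycle. *)
Lemma inX_cyclic_word n (X : {set 'I_n}) :
  1 < n -> inX X = mis_path (char_word X ++ take 2 (char_word X)).
Proof.
move=> n_gt1; set u := _ ++ _.
have size_u : size u = n.+2.
  by rewrite size_cat size_take size_char_word; case: ifP; lia.
have nth_u (i : 'I_n) k : k <= 2 -> nth false u (i + k) = (iter k (@sigma n) i \in X).
  move=> k_le; rewrite (@nth_cat_take2 n) ?size_char_word //; last by have := ltn_ord i; lia.
  case: k k_le => [|[|[|//]]] _ /=; rewrite -nth_char_word.
  - by rewrite addn0 modn_small.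
  - by rewrite val_sigma addn1.
  - by rewrite !val_sigma modnSml addn2.
have window_u (i : 'I_n) :
    mis_window (nth false u i) (nth false u i.+1) (nth false u i.+2) =
    mis_window (i \in X) (sigma i \in X) (sigma (sigma i) \in X).
  by rewrite -(nth_u i 0) // -(nth_u i 1) // -(nth_u i 2) // addn0 addn1 addn2.
rewrite inX_windowsE; apply/forallP/mis_pathP => [H i|H i].
  by rewrite size_u !ltnS => i_lt; rewrite (window_u (Ordinal i_lt)).
by rewrite -window_u H // size_u !ltnS.
Qed.

Fixpoint n_fillings k (a b x y : bool) : nat :=
  if k is k'.+1 then
    (if mis_window a b true then n_fillings k' b true x y else 0) +
    (if mis_window a b false then n_fillings k' b false x y else 0)
  else mis_path [:: a; b; x; y].

Lemma n_fillingsS k a b x y : n_fillings k.+1 a b x y =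
  (if mis_window a b true then n_fillings k b true x y else 0) +
  (if mis_window a b false then n_fillings k b false x y else 0).
Proof. by []. Qed.

Lemma count_fillings k a b x y :
  count (fun r => mis_path (a :: b :: r ++ [:: x; y])) (bitseqs k) = n_fillings k a b x y.
Proof.
elim: k a b => [|k IH] a b /=; first by rewrite addn0.
have count_c c : count (fun r => mis_path (a :: b :: c :: r ++ [:: x; y])) (bitseqs k) =
                 if mis_window a b c then n_fillings k b c x y else 0.
  rewrite -IH; transitivity
    (count (fun r => mis_window a b c && mis_path (b :: c :: r ++ [:: x; y])) (bitseqs k)) => //.
  by case: mis_window => //; elim: (bitseqs k).
by rewrite count_cat !count_map; congr (_ + _); apply: count_c.
Qed.

Lemma n_fillings_rec k a b x y :
  n_fillings k.+3 a b x y = n_fillings k.+1 a b x y + n_fillings k a b x y.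
Proof.
elim: k a b => [|k IH] a b; first by case: a; case: b; case: x; case: y.
rewrite n_fillingsS !IH [n_fillings k.+2 a b x y]n_fillingsS [n_fillings k.+1 a b x y]n_fillingsS.
by case: (mis_window a b true); case: (mis_window a b false); lia.
Qed.

(* Cyclic words of length k+2, split by their first two letters, which the
   cycle repeats after the last one. *)
Definition n_cyclic_words k : nat :=
  n_fillings k true true true true + n_fillings k true false true false +
  n_fillings k false true false true + n_fillings k false false false false.

Lemma card_Xfam_cyclic_words k : #|Xfam k.+2| = n_cyclic_words k.
Proof.
have -> : Xfam k.+2 = [set X | mis_path (char_word X ++ take 2 (char_word X))].
  by apply/setP => X; rewrite !inE inX_cyclic_word.
rewrite (card_char_word _ (fun s => mis_path (s ++ take 2 s))) /= /n_cyclic_words.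
rewrite !count_cat !count_map !count_cat !count_map -!count_fillings -!addnA.
by do 3?[congr (_ + _)]; apply: eq_count => r; rewrite /preim /= take0.
Qed.

Lemma n_cyclic_words_rec k : n_cyclic_words k.+3 = n_cyclic_words k.+1 + n_cyclic_words k.
Proof. by rewrite /n_cyclic_words !n_fillings_rec; lia. Qed.

Lemma n_cyclic_words_perrin k : n_cyclic_words k = perrin k.+2.
Proof.
elim/ltn_ind: k => -[|[|[|k]]] IH; try by [].
by rewrite n_cyclic_words_rec !IH //; lia.
Qed.

Lemma card_Xfam n : 0 < n -> #|Xfam n| = perrin n.
Proof.
case: n => [|[|k]] // _; last by rewrite card_Xfam_cyclic_words n_cyclic_words_perrin.
apply/eqP; rewrite cards_eq0; apply/eqP/setP => X; rewrite !inE inX_windowsE.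
apply/negbTE/negP => /forallP /(_ ord0).
have sigma0 : sigma (ord0 : 'I_1) = ord0 by apply: val_inj.
by rewrite !sigma0 /mis_window; case: (ord0 \in X).
Qed.

Lemma iter_modn (T : Type) (f : T -> T) x o k :
  iter o f x = x -> iter k f x = iter (k %% o) f x.
Proof.
by move=> fix_x; rewrite {1}(divn_eq k o) addnC iterD iterM (iter_fix _ fix_x).
Qed.

Lemma iter_order_dvdn (T : finType) (f : T -> T) x k :
  injective f -> (iter k f x == x) = (order f x %| k).
Proof.
move=> f_inj; rewrite (iter_modn k (iter_order f_inj x)) /dvdn.
apply/eqP/eqP => [iter_x|->//].
by have := findex_iter (ltn_pmod k (order_gt0 f x)); rewrite iter_x findex0.
Qed.

Section Rotation.
Variable n : nat.
Local Notation rot := (@sigma_set n).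
Implicit Types X Y : {set 'I_n}.

Lemma val_iter_sigma k (i : 'I_n) : val (iter k (@sigma n) i) = (i + k) %% n.
Proof.
elim: k => [|k IH]; first by rewrite addn0 modn_small.
by rewrite iterS val_sigma IH modnSml addnS.
Qed.

Lemma iter_sigma_n (i : 'I_n) : iter n (@sigma n) i = i.
Proof. by apply: val_inj; rewrite val_iter_sigma modnDr modn_small. Qed.

Lemma mem_sigma_set X (i : 'I_n) : (sigma i \in rot X) = (i \in X).
Proof. exact/mem_imset/ordS_inj. Qed.

Lemma mem_iter_sigma_set k X (i : 'I_n) :
  (iter k (@sigma n) i \in iter k rot X) = (i \in X).
Proof. by elim: k => [|k IH] //=; rewrite mem_sigma_set. Qed.

Lemma sigma_set_inj : injective rot.
Proof. exact/imset_inj/ordS_inj. Qed.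

Lemma iter_sigma_set_n X : iter n rot X = X.
Proof. by apply/setP => i; rewrite -{1}(iter_sigma_n i) mem_iter_sigma_set. Qed.

Lemma inX_sigma_set X : inX (rot X) = inX X.
Proof.
rewrite !inX_windowsE; apply/forallP/forallP => H i.
  by have := H (sigma i); rewrite !mem_sigma_set.
have sigma_pred (j : 'I_n) : sigma (ord_pred j) = j := ord_predK j.
by rewrite -(sigma_pred i) !mem_sigma_set; apply: H.
Qed.

Lemma inX_iter_sigma_set k X : inX (iter k rot X) = inX X.
Proof. by elim: k => [|k IH] //=; rewrite inX_sigma_set. Qed.

Lemma order_sigma_set_dvdn X : order rot X %| n.
Proof. by rewrite -iter_order_dvdn ?iter_sigma_set_n //; exact: sigma_set_inj. Qed.

Hypothesis n_gt0 : 0 < n.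

Lemma sorbitE X : sorbit X = [set Y | fconnect rot X Y].
Proof.
apply/setP => Y; rewrite inE; apply/imsetP/idP => [[k _ ->]|XY].
  exact: fconnect_iter.
exists (Ordinal (ltn_pmod (findex rot X Y) n_gt0)); first by rewrite inE.
by rewrite /= -(iter_modn _ (iter_sigma_set_n X)) iter_findex.
Qed.

Lemma card_sorbit X : #|sorbit X| = order rot X.
Proof. by rewrite sorbitE; apply: eq_card => Y; rewrite inE. Qed.

Lemma sorbit_id X : X \in sorbit X.
Proof. by rewrite sorbitE inE connect0. Qed.

Lemma sorbit_eq X Y : Y \in sorbit X -> sorbit Y = sorbit X.
Proof.
rewrite !sorbitE inE => XY; apply/setP => Z; rewrite !inE.
apply/idP/idP => [|XZ]; first exact: connect_trans.
by apply: connect_trans XZ; rewrite (fconnect_sym sigma_set_inj).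
Qed.

Lemma sorbit_Xfam X Y : Y \in sorbit X -> (Y \in Xfam n) = (X \in Xfam n).
Proof. by case/imsetP => k _ ->; rewrite !inE inX_iter_sigma_set. Qed.

Lemma card_orbits_of_size e :
  e * #|[set O in orbits n | #|O| == e]| = #|[set X in Xfam n | order rot X == e]|.
Proof.
set A := [set X in Xfam n | order rot X == e].
have orbits_A : @sorbit n @: A = [set O in orbits n | #|O| == e].
  apply/setP => O; apply/imsetP/idP => [[X XA ->]|].
    move: XA; rewrite !inE => /andP[XF oX].
    by rewrite card_sorbit oX andbT; apply: imset_f; rewrite inE.
  rewrite inE => /andP[/imsetP[X XF ->] cX]; exists X => //.
  by rewrite inE XF -card_sorbit.
rewrite -[#|A|]sum1_card (partition_big_imset (@sorbit n)) /= orbits_A.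
rewrite [RHS](eq_bigr (fun _ => e)); first by rewrite sum_nat_const mulnC.
move=> O; rewrite inE => /andP[/imsetP[X XF ->] /eqP cX].
rewrite sum1dep_card -cX; apply: eq_card => Y; rewrite !inE.
apply/idP/idP => [/andP[_ /eqP <-]|YX]; first exact: sorbit_id.
have := sorbit_Xfam YX; rewrite !inE => ->; rewrite inE in XF.
by rewrite XF -card_sorbit (sorbit_eq YX) cX !eqxx.
Qed.

End Rotation.

Definition periodic_ext n e (Y : {set 'I_e}) : {set 'I_n} :=
  [set i : 'I_n | [exists j in Y, val j == i %% e]].

Section PeriodicExtension.
Variables n e : nat.
Hypotheses (n_gt0 : 0 < n) (e_dvd_n : e %| n).
Let e_gt0 : 0 < e := dvdn_gt0 n_gt0 e_dvd_n.
Let e_le_n : e <= n := dvdn_leq n_gt0 e_dvd_n.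
Local Notation ext := (@periodic_ext n e).
Implicit Types (X : {set 'I_n}) (Y : {set 'I_e}).

Definition ord_mod (i : 'I_n) : 'I_e := Ordinal (ltn_pmod i e_gt0).

Lemma mem_periodic_ext Y (i : 'I_n) (j : 'I_e) :
  val j = i %% e -> (i \in ext Y) = (j \in Y).
Proof.
move=> ij; rewrite inE; apply/existsP/idP => [[j' /andP[j'Y /eqP j'i]]|jY].
  by have -> : j = j' by apply: val_inj; rewrite ij j'i.
by exists j; rewrite jY ij eqxx.
Qed.

Lemma mem_periodic_ext_widen Y (j : 'I_e) :
  (widen_ord e_le_n j \in ext Y) = (j \in Y).
Proof. by apply: mem_periodic_ext; rewrite /= modn_small. Qed.

Lemma periodic_ext_inj : injective ext.
Proof.
by move=> Y Y' eqY; apply/setP => j; rewrite -!mem_periodic_ext_widen eqY.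
Qed.

Lemma val_sigma_mod (i : 'I_n) (j : 'I_e) :
  val j = i %% e -> val (sigma j) = sigma i %% e.
Proof. by move=> ij; rewrite !val_sigma ij modnSml (modn_dvdm _ e_dvd_n). Qed.

Lemma sigma_set_periodic_ext Y : sigma_set (ext Y) = ext (sigma_set Y).
Proof.
apply/setP => i; rewrite -[i]ord_predK; set i' := ord_pred i.
have i'j : val (ord_mod i') = i' %% e by [].
rewrite [ordS i']/(sigma i') mem_sigma_set (mem_periodic_ext _ i'j).
by rewrite -mem_sigma_set (mem_periodic_ext _ (val_sigma_mod i'j)).
Qed.

Lemma iter_sigma_set_periodic_ext k Y :
  iter k (@sigma_set n) (ext Y) = ext (iter k (@sigma_set e) Y).
Proof. by elim: k => [|k IH] //=; rewrite IH sigma_set_periodic_ext. Qed.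

Lemma inX_periodic_ext Y : inX (ext Y) = inX Y.
Proof.
have windowE (i : 'I_n) (j : 'I_e) : val j = i %% e ->
    mis_window (i \in ext Y) (sigma i \in ext Y) (sigma (sigma i) \in ext Y) =
    mis_window (j \in Y) (sigma j \in Y) (sigma (sigma j) \in Y).
  move=> ij; have ij1 := val_sigma_mod ij; have ij2 := val_sigma_mod ij1.
  by rewrite (mem_periodic_ext _ ij) (mem_periodic_ext _ ij1) (mem_periodic_ext _ ij2).
rewrite !inX_windowsE; apply/forallP/forallP => H j.
  by rewrite -(windowE (widen_ord e_le_n j)) /= ?modn_small.
by rewrite (windowE _ (ord_mod j)).
Qed.

Lemma order_periodic_ext Y : order (@sigma_set n) (ext Y) = order (@sigma_set e) Y.
Proof.
apply/eqP; rewrite eqn_dvd -!iter_order_dvdn; try exact: sigma_set_inj.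
rewrite iter_sigma_set_periodic_ext iter_order ?eqxx /=; last exact: sigma_set_inj.
apply/eqP/periodic_ext_inj; rewrite -iter_sigma_set_periodic_ext.
exact/iter_order/sigma_set_inj.
Qed.

Lemma periodic_ext_restrict X :
  iter e (@sigma_set n) X = X -> X = ext [set j | widen_ord e_le_n j \in X].
Proof.
move=> fix_X; have periodic q (i : 'I_n) : (iter (q * e) (@sigma n) i \in X) = (i \in X).
  by rewrite -{1}(iter_fix q fix_X) -iterM mem_iter_sigma_set.
apply/setP => i; rewrite (@mem_periodic_ext _ _ (ord_mod i)) // inE.
rewrite -(periodic (i %/ e) (widen_ord e_le_n (ord_mod i))); congr (_ \in X).
by apply: val_inj; rewrite val_iter_sigma /= addnC -divn_eq modn_small.
Qed.

Lemma Xfam_order_eq_periodic_ext :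
  [set X in Xfam n | order (@sigma_set n) X == e] =
  ext @: [set Y in Xfam e | order (@sigma_set e) Y == e].
Proof.
apply/setP => X; rewrite inE; apply/andP/imsetP => [[XF /eqP oX]|[Y]].
  have fix_X : iter e (@sigma_set n) X = X by rewrite -oX; exact/iter_order/sigma_set_inj.
  exists [set j | widen_ord e_le_n j \in X]; last exact: periodic_ext_restrict.
  rewrite inE in XF.
  by rewrite !inE -inX_periodic_ext -order_periodic_ext -periodic_ext_restrict // XF oX eqxx.
by rewrite !inE => /andP[YF oY] ->; rewrite inX_periodic_ext YF order_periodic_ext.
Qed.

Lemma card_Xfam_order_eq :
  #|[set X in Xfam n | order (@sigma_set n) X == e]| =
  #|[set Y in Xfam e | order (@sigma_set e) Y == e]|.
Proof. by rewrite Xfam_order_eq_periodic_ext card_imset //; exact: periodic_ext_inj. Qed.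

End PeriodicExtension.

Lemma card_partition_seq (T : finType) (U : eqType) (A : {set T}) (h : T -> U)
    (s : seq U) :
  uniq s -> {in A, forall x, h x \in s} ->
  #|A| = \sum_(u <- s) #|[set x in A | h x == u]|.
Proof.
move=> s_uniq hA; rewrite -sum1_card.
rewrite (eq_bigr (fun x => \sum_(u <- s) (h x == u : nat))); last first.
  move=> x xA; rewrite -(big_mkcond (fun u => h x == u) (fun _ => 1%N)) sum1_count.
  by rewrite (eq_count (a2 := pred1 (h x))) ?count_uniq_mem ?hA // => u; rewrite /= eq_sym.
rewrite exchange_big /=; apply: eq_bigr => u _.
by rewrite -big_mkcondr sum1dep_card; apply: eq_card => x; rewrite !inE.
Qed.

Lemma card_orbits_of_size_orb1 n e : 0 < n -> e %| n ->
  #|[set O in orbits n | #|O| == e]| = orb1 e.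
Proof.
move=> n_gt0 e_dvd_n; have e_gt0 : 0 < e := dvdn_gt0 n_gt0 e_dvd_n.
apply/eqP; rewrite -(eqn_pmul2l e_gt0) (card_orbits_of_size n_gt0) card_Xfam_order_eq //.
by rewrite -(card_orbits_of_size e_gt0) /orb1 /orbd divn1.
Qed.

Lemma orb_sum_orb1 n : 0 < n -> orb n = \sum_(e <- divisors n) orb1 e.
Proof.
move=> n_gt0; rewrite /orb (card_partition_seq (h := fun O : {set _} => #|O|) (divisors_uniq n)).
  apply: eq_big_seq => e; rewrite -dvdn_divisors // => e_dvd_n.
  exact: card_orbits_of_size_orb1.
move=> O /imsetP[X _ ->]; rewrite -dvdn_divisors // card_sorbit //.
exact: order_sigma_set_dvdn.
Qed.

Lemma perrin_sum_orb1 n : 0 < n -> perrin n = \sum_(e <- divisors n) e * orb1 e.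
Proof.
move=> n_gt0; rewrite -card_Xfam //.
rewrite (card_partition_seq (h := order (@sigma_set n)) (divisors_uniq n)).
  apply: eq_big_seq => e; rewrite -dvdn_divisors // => e_dvd_n.
  by rewrite -(card_orbits_of_size n_gt0) card_orbits_of_size_orb1.
by move=> X _; rewrite -dvdn_divisors //; exact: order_sigma_set_dvdn.
Qed.

Lemma mobius_sqr_dvdn p d : prime p -> 0 < d -> p * p %| d -> mobius d = 0%R.
Proof.
move=> p_pr d_gt0 pp_d; rewrite /mobius gtn_eqF //.
have p_d : p \in primes d.
  by rewrite mem_primes p_pr d_gt0 (dvdn_trans (dvdn_mulr p (dvdnn p)) pp_d).
have : 1 < logn p d by rewrite -pfactor_dvdn // expnS expn1.
by case: allP => // /(_ p p_d) /eqP ->.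
Qed.

Lemma mobius_mul_prime p d :
  prime p -> 0 < d -> ~~ (p %| d) -> mobius (p * d) = (- mobius d)%R.
Proof.
move=> p_pr d_gt0 p_d; have p_gt0 := prime_gt0 p_pr.
have pd_gt0 : 0 < p * d by rewrite muln_gt0 p_gt0 d_gt0.
have primes_pd : perm_eq (primes (p * d)) (p :: primes d).
  apply: uniq_perm; first exact: primes_uniq.
    by rewrite /= primes_uniq andbT mem_primes p_pr d_gt0.
  by move=> q; rewrite primesM // primes_prime // !inE.
rewrite /mobius !gtn_eqF // (perm_size primes_pd) (perm_all _ primes_pd) /=.
have -> : logn p (p * d) == 1.
  by rewrite lognM // logn_prime // eqxx (lognE p d) p_pr d_gt0 (negbTE p_d).
rewrite (eq_in_all (a2 := fun q => logn q d == 1)); last first.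
  move=> q; rewrite mem_primes => /and3P[q_pr _ q_d].
  have /negbTE qp : q != p by apply: contraNneq p_d => <-.
  by rewrite lognM // logn_prime // qp add0n.
by case: all; rewrite ?oppr0 // exprS mulN1r.
Qed.

Lemma perm_divisors_multiples e m : 0 < m -> e %| m ->
  perm_eq [seq d <- divisors m | e %| d] (map (muln e) (divisors (m %/ e))).
Proof.
move=> m_gt0 e_m; have e_gt0 := dvdn_gt0 m_gt0 e_m.
have me : m = e * (m %/ e) by rewrite mulnC divnK.
have me_gt0 : 0 < m %/ e by rewrite divn_gt0 // dvdn_leq.
apply: uniq_perm; first by rewrite filter_uniq // divisors_uniq.
  rewrite map_inj_in_uniq ?divisors_uniq // => x y _ _ /eqP.
  by rewrite eqn_pmul2l // => /eqP.
move=> x; rewrite mem_filter -dvdn_divisors //; apply/andP/mapP => [[e_x x_m]|[y]].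
  exists (x %/ e); last by rewrite mulnC divnK.
  by rewrite -dvdn_divisors // -(dvdn_pmul2l e_gt0) -me mulnC divnK.
rewrite -dvdn_divisors // => y_me ->; split; first exact: dvdn_mulr.
by rewrite me dvdn_pmul2l.
Qed.

Lemma perm_divisors_divn m : 0 < m -> perm_eq (map (divn m) (divisors m)) (divisors m).
Proof.
move=> m_gt0; have cofactorK d : d %| m -> m %/ (m %/ d) = d.
  by move=> d_m; rewrite divnA // mulKn.
apply: uniq_perm; last first.
- move=> x; apply/mapP/idP => [[d]|x_m].
    by rewrite -!dvdn_divisors // => d_m ->; rewrite dvdn_div.
  rewrite -dvdn_divisors // in x_m.
  by exists (m %/ x); rewrite ?cofactorK // -dvdn_divisors // dvdn_div.
- exact: divisors_uniq.
rewrite map_inj_in_uniq ?divisors_uniq // => x y; rewrite -!dvdn_divisors // => x_m y_m mxy.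
by rewrite -(cofactorK x x_m) -(cofactorK y y_m) /= mxy.
Qed.

Lemma perm_divisors_sub d n : 0 < n -> d %| n ->
  perm_eq (divisors d) [seq x <- divisors n | x %| d].
Proof.
move=> n_gt0 d_n; have d_gt0 := dvdn_gt0 n_gt0 d_n.
apply: uniq_perm; rewrite ?filter_uniq ?divisors_uniq // => x.
rewrite mem_filter -!dvdn_divisors //; apply/idP/andP => [x_d|[]//].
by split=> //; exact: dvdn_trans d_n.
Qed.

(* For a prime p | m > 1 with m = p m': the divisors of m prime to p are the
   divisors k of m' prime to p, and the others are the p k, with
   mu(p k) = - mu(k), or 0 when p | k. *)
Lemma sum_mobius m : 0 < m -> (\sum_(d <- divisors m) mobius d = (m == 1)%:R)%R.
Proof.
case: m => [//|[|m]] _; first by rewrite big_seq1.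
set M := m.+2; have p_pr : prime (pdiv M) := pdiv_prime (isT : 1 < M).
set p := pdiv M in p_pr *; have p_M : p %| M := pdiv_dvd M.
have p_gt0 := prime_gt0 p_pr; set M' := M %/ p.
have MM' : M = p * M' by rewrite mulnC divnK.
have M'_gt0 : 0 < M' by rewrite divn_gt0 // dvdn_leq.
have coprime_part : (\sum_(d <- divisors M | ~~ (p %| d)%N) mobius d =
                     \sum_(k <- divisors M' | ~~ (p %| k)%N) mobius k)%R.
  rewrite -big_filter -[RHS]big_filter; apply: perm_big.
  apply: uniq_perm; rewrite ?filter_uniq ?divisors_uniq // => x.
  rewrite !mem_filter -!dvdn_divisors //; apply: andb_id2l => p_x.
  by rewrite MM' Gauss_dvdr // coprime_sym prime_coprime.
have multiple_part : (\sum_(d <- divisors M | (p %| d)%N) mobius d =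
                      - \sum_(k <- divisors M' | ~~ (p %| k)%N) mobius k)%R.
  rewrite -big_filter (perm_big _ (perm_divisors_multiples (isT : 0 < M) p_M)) big_map -/M'.
  rewrite (bigID (fun k => p %| k)) /= big1_seq ?add0r; last first.
    move=> k /andP[p_k k_M']; rewrite -(dvdn_divisors _ M'_gt0) in k_M'.
    rewrite (mobius_sqr_dvdn p_pr) ?dvdn_pmul2l //.
    by rewrite muln_gt0 p_gt0 (dvdn_gt0 M'_gt0).
  rewrite -sumrN big_seq_cond [RHS]big_seq_cond; apply: eq_bigr => k /andP[k_M' p_k].
  rewrite -(dvdn_divisors _ M'_gt0) in k_M'.
  by rewrite mobius_mul_prime // (dvdn_gt0 M'_gt0).
by rewrite (bigID (fun d => p %| d)) /= multiple_part coprime_part addNr.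
Qed.

Local Open Scope ring_scope.

Lemma sum_mobius_multiples (R : pzRingType) n e : (0 < n)%N -> (e %| n)%N ->
  \sum_(d <- divisors n | (e %| d)%N) (mobius (n %/ d))%:~R = (e == n)%:R :> R.
Proof.
move=> n_gt0 e_n; have e_gt0 := dvdn_gt0 n_gt0 e_n.
have ne_gt0 : (0 < n %/ e)%N by rewrite divn_gt0 // dvdn_leq.
rewrite -big_filter (perm_big _ (perm_divisors_multiples n_gt0 e_n)) big_map.
under eq_bigr do rewrite divnMA.
rewrite -(big_map (divn (n %/ e)%N) xpredT (fun k => (mobius k)%:~R)).
rewrite (perm_big _ (perm_divisors_divn ne_gt0)) -rmorph_sum sum_mobius //.
by rewrite eq_sym eqn_div // mul1n; case: (e == n).
Qed.

Lemma mobius_inversion (R : pzRingType) (f g : nat -> R) n :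
  (forall d, (d %| n)%N -> g d = \sum_(e <- divisors d) f e) -> (0 < n)%N ->
  \sum_(d <- divisors n) g d * (mobius (n %/ d))%:~R = f n.
Proof.
move=> g_sum n_gt0.
under eq_big_seq => d.
  rewrite -dvdn_divisors // => d_n.
  rewrite g_sum // mulr_suml (perm_big _ (perm_divisors_sub n_gt0 d_n)) big_filter.
  over.
rewrite (exchange_big_dep xpredT) //=.
under eq_big_seq => e.
  rewrite -dvdn_divisors // => e_n; rewrite -mulr_sumr sum_mobius_multiples //.
  over.
rewrite (bigD1_seq n) ?divisors_id ?divisors_uniq //= eqxx mulr1 big1 ?addr0 //.
by move=> e /negbTE ->; rewrite mulr0.
Qed.

Theorem theorem4p1 (n : nat) : (0 < n)%N ->
  orb n = (\sum_(d <- divisors n) orb1 d)%N /\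
  (orb1 n)%:R = (n%:R)^-1 * \sum_(d <- divisors n) (perrin d)%:R * (mobius (n %/ d))%:~R :> rat.
Proof.
move=> n_gt0; split; first exact: orb_sum_orb1.
rewrite (@mobius_inversion _ (fun e => (e * orb1 e)%:R)) //.
  by rewrite natrM mulKf // pnatr_eq0 -lt0n.
by move=> d d_n; rewrite perrin_sum_orb1 ?natr_sum // (dvdn_gt0 n_gt0 d_n).
Qed.
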